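(* Let $K^T \ge 2$, let $\mathcal{D}^T$ be a probability distribution over pairs $(x,y)$ with $x$ in an input space $\mathcal{X}^T$ and $y$ a one-hot vector in $\{0,1\}^{K^T}$, and let $\ell(z,y) = -\sum_{j=1}^{K^T} y_j \log p_j(z)$ be the cross-entropy loss with softmax $p_j(z) = e^{z_j}/\sum_i e^{z_i}$. Let $z_S, z_L : \mathcal{X}^T \to \mathbb{R}^{K^T}$ be measurable logit maps of a service model and a local model before reprogramming, and $z^*_S(\cdot,\mathbf{Q}^* ), z^*_L(\cdot,\mathbf{P}^* ) : \mathcal{X}^T \to \mathbb{R}^{K^T}$ measurable logit maps of the two models after visual reprogramming with fixed prompts $\mathbf{Q}^*$, $\mathbf{P}^*$ respectively. Define the (finite) risks $\mathcal{R}_L(\mathcal{D}^T) = \mathbb{E}_{(x,y)\sim\mathcal{D}^T}[\ell(z_L(x),y)]$, $\mathcal{R}_S(\mathcal{D}^T) = \mathbb{E}[\ell(z_S(x),y)]$, $\mathcal{R}_L(\mathcal{D}^T,\mathbf{P}^* ) = \mathbb{E}[\ell(z^*_L(x,\mathbf{P}^* ),y)]$, $\mathcal{R}_S(\mathcal{D}^T,\mathbf{Q}^* ) = \mathbb{E}[\ell(z^*_S(x,\mathbf{Q}^* ),y)]$. Assume: (a) (service model superiority) $\mathcal{R}_S(\mathcal{D}^T) \le \mathcal{R}_L(\mathcal{D}^T)$ and $\mathcal{R}_S(\mathcal{D}^T,\mathbf{Q}^* ) \le \mathcal{R}_L(\mathcal{D}^T,\mathbf{P}^* )$; (b) ($\epsilon$-faithful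 priming) for some $\epsilon \ge 0$, $\mathbb{E}_{(x,y)\sim\mathcal{D}^T}[\|z_S(x) - z_L(x)\|_1] \le \epsilon$ and $\mathbb{E}_{(x,y)\sim\mathcal{D}^T}[\|z^*_S(x,\mathbf{Q}^* ) - z^*_L(x,\mathbf{P}^* )\|_1] \le \epsilon$. Then (1) $\mathcal{R}_L(\mathcal{D}^T) - \epsilon \le \mathcal{R}_S(\mathcal{D}^T) \le \mathcal{R}_L(\mathcal{D}^T)$, and (2) $\mathcal{R}_L(\mathcal{D}^T,\mathbf{P}^* ) - \epsilon \le \mathcal{R}_S(\mathcal{D}^T,\mathbf{Q}^* ) \le \mathcal{R}_L(\mathcal{D}^T,\mathbf{P}^* )$.
   Context: In the paper's setting, $z^*_S(x,\mathbf{Q}^* ) = \mathcal{F}_S(g_{\mathrm{in}}(x,\mathbf{Q}^* ))$ and $z^*_L(x,\mathbf{P}^* ) = \mathcal{F}_L(g_{\mathrm{in}}(x,\mathbf{P}^* ))$, where $g_{\mathrm{in}}$ is an input transformation and $\mathbf{Q}^*$, $\mathbf{P}^*$ are optimal visual prompts for the service model $\mathcal{F}_S$ and primed local model $\mathcal{F}_L$; for the statement these are simply fixed. $\|\cdot\|_1$ is the $L_1$ norm on $\mathbb{R}^{K^T}$. *)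

From HB Require Import structures.
From mathcomp Require Import all_boot all_order all_algebra.
From mathcomp Require Import all_classical all_reals all_analysis.
Set Implicit Arguments. Unset Strict Implicit. Unset Printing Implicit Defensive.
Import Order.TTheory GRing.Theory Num.Theory.
Local Open Scope ring_scope.

Definition softmax (R : realType) (K : nat) (z : 'I_K -> R) (j : 'I_K) : R :=
  expR (z j) / \sum_(i < K) expR (z i).

Definition xent (R : realType) (K : nat) (z y : 'I_K -> R) : R :=
  - \sum_(j < K) y j * ln (softmax z j).

Definition l1dist (R : realType) (K : nat) (z z' : 'I_K -> R) : R :=
  \sum_(j < K) `|z j - z' j|.

Definition onehot (R : realType) (K : nat) (y : 'I_K -> R) : Prop :=
  exists c : 'I_K, forall j, y j = (j == c)%:R.

From HB Require Import structures.
From mathcomp Require Import all_boot all_order all_algebra.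
From mathcomp Require Import all_classical all_reals all_analysis.
From mathcomp Require Import lra.

Set Implicit Arguments.
Unset Strict Implicit.
Unset Printing Implicit Defensive.
Import Order.TTheory GRing.Theory Num.Theory.
Local Open Scope ring_scope.

(* For a one-hot label c the cross-entropy is the log-sum-exp of the logits
   minus the logit z_c.  Moving the logits from z to z' raises the
   log-sum-exp by at most max_i (z'_i - z_i), so the loss rises by at most
   max_i ((z'_i - z_i) - (z'_c - z_c)) <= ||z - z'||_1.  Integrating this
   pointwise bound gives R_L - R_S <= E ||z_S - z_L||_1 <= eps; the upper
   bounds are the superiority hypotheses themselves. *)

Section CrossEntropy.
Variables (R : realType) (K : nat).
Implicit Types (z y : 'I_K -> R) (c : 'I_K).

Lemma sumr_expR_gt0 z : (0 < K)%N -> 0 < \sum_(i < K) expR (z i).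
Proof.
move=> K_gt0; rewrite (bigD1 (Ordinal K_gt0)) //= ltr_pwDl ?expR_gt0 //.
by rewrite sumr_ge0 // => i _; rewrite ltW ?expR_gt0.
Qed.

Lemma xent_onehotE z y c : (forall j, y j = (j == c)%:R) ->
  xent z y = ln (\sum_(i < K) expR (z i)) - z c.
Proof.
move=> yE; have K_gt0 : (0 < K)%N := leq_ltn_trans (leq0n c) (ltn_ord c).
rewrite /xent (bigD1 c) //= big1 => [|j jc]; last by rewrite yE (negbTE jc) mul0r.
rewrite yE eqxx mul1r addr0 /softmax.
by rewrite ln_div ?posrE ?expR_gt0 ?sumr_expR_gt0 // expRK opprB.
Qed.

Lemma ln_sumr_expR_le z z' M : (0 < K)%N -> (forall i, z' i - z i <= M) ->
  ln (\sum_(i < K) expR (z' i)) <= ln (\sum_(i < K) expR (z i)) + M.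
Proof.
move=> K_gt0 hM; rewrite -[M in _ + M]expRK -lnM ?posrE ?expR_gt0 ?sumr_expR_gt0 //.
rewrite ler_ln ?posrE ?mulr_gt0 ?expR_gt0 ?sumr_expR_gt0 // mulr_suml.
by apply: ler_sum => i _; rewrite -expRD ler_expR -lerBlDl.
Qed.

Lemma l1dist_ge0 z z' : 0 <= l1dist z z'.
Proof. exact: sumr_ge0. Qed.

Lemma logit_shift_le_l1dist z z' i c :
  (z' i - z i) - (z' c - z c) <= l1dist z z'.
Proof.
have [->|ic] := eqVneq i c; first by rewrite subrr l1dist_ge0.
have pair_le : `|z i - z' i| + `|z c - z' c| <= l1dist z z'.
  rewrite /l1dist (bigD1 i) //= (bigD1 c) /=; last by rewrite eq_sym ic.
  by rewrite addrA lerDl sumr_ge0.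
apply: le_trans pair_le; rewrite distrC [`|z c - _|]distrC.
by apply: le_trans (ler_norm _) (ler_normB _ _).
Qed.

Lemma xent_sub_le_l1dist z z' y : onehot y -> xent z' y - xent z y <= l1dist z z'.
Proof.
case=> c yE; have K_gt0 : (0 < K)%N := leq_ltn_trans (leq0n c) (ltn_ord c).
rewrite !(xent_onehotE _ yE).
have shift_le i : z' i - z i <= (z' c - z c) + l1dist z z'.
  by rewrite -lerBlDl logit_shift_le_l1dist.
by have := ln_sumr_expR_le K_gt0 shift_le; lra.
Qed.

End CrossEntropy.

Local Open Scope ereal_scope.

Section RiskGap.
Context d (T : measurableType d) (R : realType) (mu : {measure set T -> \bar R}).

Lemma integrable_ge0_bounded (h : T -> R) (e : R) :
  measurable_fun setT h -> (forall w, (0 <= h w)%R) ->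
  \int[mu]_w (h w)%:E <= e%:E -> mu.-integrable setT (fun w => (h w)%:E).
Proof.
move=> mh h_ge0 hle; apply/integrableP; split.
  exact/measurable_realfun.measurable_EFinP.
under eq_integral do rewrite gee0_abs ?lee_fin //.
by apply: le_lt_trans hle _; rewrite ltry.
Qed.

Lemma integral_ge_sub_of_gap (f g h : T -> R) (e : R) :
  mu.-integrable setT (fun w => (f w)%:E) -> mu.-integrable setT (fun w => (g w)%:E) ->
  measurable_fun setT h -> (forall w, (0 <= h w)%R) ->
  (forall w, (g w - f w <= h w)%R) -> \int[mu]_w (h w)%:E <= e%:E ->
  \int[mu]_w (g w)%:E - e%:E <= \int[mu]_w (f w)%:E.
Proof.
move=> fi gi mh h_ge0 gap hle.
have hi := integrable_ge0_bounded mh h_ge0 hle.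
have g_le : \int[mu]_w (g w)%:E <= \int[mu]_w (f w)%:E + \int[mu]_w (h w)%:E.
  rewrite -integralD //; apply: le_integral => //; first exact: integrableD.
  by move=> w _; rewrite -EFinD lee_fin -lerBlDl.
by rewrite leeBlDr // (le_trans g_le) // leeD2l.
Qed.

Lemma measurable_l1dist K (z z' : T -> 'I_K -> R) :
  (forall j, measurable_fun setT (fun w => z w j)) ->
  (forall j, measurable_fun setT (fun w => z' w j)) ->
  measurable_fun setT (fun w => l1dist (z w) (z' w)).
Proof.
move=> mz mz'; apply: measurable_sum => j.
apply: measurableT_comp; first exact: measurable_realfun.normr_measurable.
exact: measurable_realfun.measurable_funB.
Qed.

Lemma xent_risk_ge_sub_l1 K (y zA zB : T -> 'I_K -> R) (e : R) :
  (forall w, onehot (y w)) ->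
  (forall j, measurable_fun setT (fun w => zA w j)) ->
  (forall j, measurable_fun setT (fun w => zB w j)) ->
  mu.-integrable setT (fun w => (xent (zA w) (y w))%:E) ->
  mu.-integrable setT (fun w => (xent (zB w) (y w))%:E) ->
  \int[mu]_w (l1dist (zA w) (zB w))%:E <= e%:E ->
  \int[mu]_w (xent (zB w) (y w))%:E - e%:E <= \int[mu]_w (xent (zA w) (y w))%:E.
Proof.
move=> y1 mzA mzB iA iB hle.
apply: integral_ge_sub_of_gap iA iB _ _ _ hle.
- exact: measurable_l1dist.
- by move=> w; exact: l1dist_ge0.
- by move=> w; exact: xent_sub_le_l1dist.
Qed.

End RiskGap.

Theorem theorem1 (R : realType) (K : nat) (hK : (2 <= K)%N)
  (dO : measure_display) (Omega : measurableType dO) (P : probability Omega R)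
  (dX : measure_display) (X : measurableType dX)
  (xr : Omega -> X) (yr : Omega -> 'I_K -> R)
  (mxr : measurable_fun setT xr)
  (myr : forall j, measurable_fun setT (fun w => yr w j))
  (honehot : forall w, onehot (yr w))
  (zS zL : X -> 'I_K -> R)
  (Qt Pt : Type) (zSr : X -> Qt -> 'I_K -> R) (zLr : X -> Pt -> 'I_K -> R)
  (Qs : Qt) (Ps : Pt)
  (mzS : forall j, measurable_fun setT (fun x => zS x j))
  (mzL : forall j, measurable_fun setT (fun x => zL x j))
  (mzSr : forall j, measurable_fun setT (fun x => zSr x Qs j))
  (mzLr : forall j, measurable_fun setT (fun x => zLr x Ps j))
  (iS : P.-integrable setT (fun w => (xent (zS (xr w)) (yr w))%:E))
  (iL : P.-integrable setT (fun w => (xent (zL (xr w)) (yr w))%:E))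
  (iSr : P.-integrable setT (fun w => (xent (zSr (xr w) Qs) (yr w))%:E))
  (iLr : P.-integrable setT (fun w => (xent (zLr (xr w) Ps) (yr w))%:E))
  (eps : R) (heps : (0 <= eps)%R)
  (ha1 : \int[P]_w (xent (zS (xr w)) (yr w))%:E
           <= \int[P]_w (xent (zL (xr w)) (yr w))%:E)
  (ha2 : \int[P]_w (xent (zSr (xr w) Qs) (yr w))%:E
           <= \int[P]_w (xent (zLr (xr w) Ps) (yr w))%:E)
  (hb1 : \int[P]_w (l1dist (zS (xr w)) (zL (xr w)))%:E <= eps%:E)
  (hb2 : \int[P]_w (l1dist (zSr (xr w) Qs) (zLr (xr w) Ps))%:E <= eps%:E) :
  (\int[P]_w (xent (zL (xr w)) (yr w))%:E - eps%:E
     <= \int[P]_w (xent (zS (xr w)) (yr w))%:E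
   /\ \int[P]_w (xent (zS (xr w)) (yr w))%:E
     <= \int[P]_w (xent (zL (xr w)) (yr w))%:E)
  /\
  (\int[P]_w (xent (zLr (xr w) Ps) (yr w))%:E - eps%:E
     <= \int[P]_w (xent (zSr (xr w) Qs) (yr w))%:E
   /\ \int[P]_w (xent (zSr (xr w) Qs) (yr w))%:E
     <= \int[P]_w (xent (zLr (xr w) Ps) (yr w))%:E).
Proof.
split; split; [|exact: ha1| |exact: ha2].
- apply: xent_risk_ge_sub_l1 hb1 => // j.
  + exact: measurableT_comp (mzS j) mxr.
  + exact: measurableT_comp (mzL j) mxr.
- apply: xent_risk_ge_sub_l1 hb2 => // j.
  + exact: measurableT_comp (mzSr j) mxr.
  + exact: measurableT_comp (mzLr j) mxr.
Qed.
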